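(* Let $S_1,\dots,S_m\subseteq N$. Then $\bigcap_{i=1}^m P_{S_i}=P_{\bigcap_{i=1}^m S_i}$ as subgroups of $P_n$.
   Context: $P_n$ denotes the pure braid group on $n$ strands, generated by elements $p_{a,b}$ for $1\le a<b\le n$ subject to the relations: (A) $p_{a,b}p_{a,c}p_{b,c}=p_{a,c}p_{b,c}p_{a,b}=p_{b,c}p_{a,b}p_{a,c}$ for $1\le a<b<c\le n$; (B) $p_{a,b}p_{c,d}=p_{c,d}p_{a,b}$ and $p_{a,d}p_{b,c}=p_{b,c}p_{a,d}$ for $1\le a<b<c<d\le n$; (C) $p_{a,c}p_{b,c}^{-1}p_{b,d}p_{b,c}=p_{b,c}^{-1}p_{b,d}p_{b,c}p_{a,c}$ for $1\le a<b<c<d\le n$. Let $N=\{1,\dots,n\}$. For $S\subseteq N$, $P_S$ is the subgroup of $P_n$ generated by the $p_{a,b}$ with $a\in S$ and $b\in S$ (so $P_\emptyset$ and $P_{\{a\}}$ are trivial). *)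

(* The pure braid group P_n is given by a
   presentation; we model its elements as equivalence classes of words in the
   generators p_{a,b}^{+-1} (1 <= a < b <= n) modulo the congruence generated by
   free cancellation and the relations (A), (B), (C). *)
From mathcomp Require Import all_boot.
Set Implicit Arguments. Unset Strict Implicit. Unset Printing Implicit Defensive.

(* A letter (a, b, s) stands for p_{a,b} if s = true, p_{a,b}^{-1} if s = false. *)
Definition letter := (nat * nat * bool)%type.
Definition word := seq letter.

Definition valid_letter (n : nat) (x : letter) : bool :=
  let: (a, b, _) := x in [&& 1 <= a, a < b & b <= n].

Definition valid_word (n : nat) (w : word) : bool := all (valid_letter n) w.

Definition inv_letter (x : letter) : letter :=
  let: (a, b, s) := x in (a, b, ~~ s).

Definition gp (a b : nat) : letter := (a, b, true).
Definition gpi (a b : nat) : letter := (a, b, false).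

Inductive braid_rel (n : nat) : word -> word -> Prop :=
| relA1 a b c : 1 <= a -> a < b -> b < c -> c <= n ->
    braid_rel n [:: gp a b; gp a c; gp b c] [:: gp a c; gp b c; gp a b]
| relA2 a b c : 1 <= a -> a < b -> b < c -> c <= n ->
    braid_rel n [:: gp a c; gp b c; gp a b] [:: gp b c; gp a b; gp a c]
| relB1 a b c d : 1 <= a -> a < b -> b < c -> c < d -> d <= n ->
    braid_rel n [:: gp a b; gp c d] [:: gp c d; gp a b]
| relB2 a b c d : 1 <= a -> a < b -> b < c -> c < d -> d <= n ->
    braid_rel n [:: gp a d; gp b c] [:: gp b c; gp a d]
| relC a b c d : 1 <= a -> a < b -> b < c -> c < d -> d <= n ->
    braid_rel n [:: gp a c; gpi b c; gp b d; gp b c]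
                [:: gpi b c; gp b d; gp b c; gp a c].

Inductive braid_eq (n : nat) : word -> word -> Prop :=
| beq_refl w : braid_eq n w w
| beq_sym u v : braid_eq n u v -> braid_eq n v u
| beq_trans u v w : braid_eq n u v -> braid_eq n v w -> braid_eq n u w
| beq_ctx u v x y : braid_eq n x y -> braid_eq n (u ++ x ++ v) (u ++ y ++ v)
| beq_free x : valid_letter n x -> braid_eq n [:: x; inv_letter x] [::]
| beq_rel u v : braid_rel n u v -> braid_eq n u v.

Definition in_PS (n : nat) (S : pred nat) (w : word) : Prop :=
  exists w' : word,
    all (fun x : letter => let: (a, b, _) := x in S a && S b) w' /\
    valid_word n w' /\ braid_eq n w w'.

(* Deleting from a word every letter p_{a,b}^{+-1} with a or b outside S
   respects the defining relations, so it is a retraction of P_n onto P_S.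
   Hence w lies in P_S iff w equals its S-filtered word, and since filtering by
   S and then by T is filtering by S ∩ T, P_S ∩ P_T = P_{S ∩ T}. *)
From mathcomp Require Import all_boot zify.

Set Implicit Arguments.
Unset Strict Implicit.
Unset Printing Implicit Defensive.

Definition keep (S : pred nat) (x : letter) : bool :=
  let: (a, b, _) := x in S a && S b.

Lemma keep_predI (S T : pred nat) (x : letter) :
  keep (predI S T) x = keep S x && keep T x.
Proof.
by case: x => -[a b] s /=; case: (S a); case: (S b); case: (T a); case: (T b).
Qed.

Lemma braid_eq_cancel_commute n b c x : 1 <= b -> b < c -> c <= n ->
  braid_eq n [:: x; gpi b c; gp b c] [:: gpi b c; gp b c; x].
Proof.
move=> b_ge1 lt_bc c_le_n.
have cancel_bc : braid_eq n [:: gpi b c; gp b c] [::].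
  by apply: (@beq_free n (gpi b c)); rewrite /= b_ge1 lt_bc c_le_n.
apply: (@beq_trans n _ [:: x]).
  exact: (@beq_ctx n [:: x] [::] _ _ cancel_bc).
exact/beq_sym/(@beq_ctx n [::] [:: x] _ _ cancel_bc).
Qed.

(* Each filtered relation is trivial, again a relation, or (for (C) with
   b, c in S and d outside S) a commutation with the cancelling pair
   p_{b,c}^{-1} p_{b,c}. *)
Lemma braid_rel_filter n S u v : braid_rel n u v ->
  braid_eq n (filter (keep S) u) (filter (keep S) v).
Proof.
case=> a b c; [move=> h1 h2 h3 h4 | move=> h1 h2 h3 h4 |
  move=> d h1 h2 h3 h4 h5 | move=> d h1 h2 h3 h4 h5 | move=> d h1 h2 h3 h4 h5];
rewrite /= /keep /=;
case: (S a); case: (S b); case: (S c); try case: (S d); rewrite /=;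
try (by apply: beq_refl);
try (by apply: beq_rel; first [ exact: relA1 | exact: relA2 | exact: relB1
                                | exact: relB2 | exact: relC ]);
apply: braid_eq_cancel_commute; lia.
Qed.

Lemma braid_eq_filter n S u v : braid_eq n u v ->
  braid_eq n (filter (keep S) u) (filter (keep S) v).
Proof.
elim=> {u v}.
- by move=> w; apply: beq_refl.
- by move=> u v _; apply: beq_sym.
- by move=> u v w _ Huv _; apply: beq_trans Huv.
- by move=> u v x y _ Hxy; rewrite !filter_cat; apply: beq_ctx.
- move=> [[a b] s] Hx /=; case: (S a && S b); last exact: beq_refl.
  exact: (@beq_free n (a, b, s)).
- by move=> u v; apply: braid_rel_filter.
Qed.

Lemma in_PS_filter n S w : valid_word n w ->
  in_PS n S w <-> braid_eq n w (filter (keep S) w).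
Proof.
move=> Hw; split.
- case=> w' [keep_w' [_ Hww']].
  have filter_w' : filter (keep S) w' = w' by apply/all_filterP.
  apply: beq_trans (Hww') _; rewrite -{1}filter_w'.
  exact: braid_eq_filter (beq_sym Hww').
- move=> Hw_filter; exists (filter (keep S) w); split; last split => //.
  + exact: filter_all.
  + by rewrite /valid_word all_filter; apply: sub_all Hw => x Hx; apply/implyP.
Qed.

Lemma in_PST n w : valid_word n w -> in_PS n predT w.
Proof.
move=> Hw; exists w; split; first by apply/allP => -[[a b] s].
by split=> //; apply: beq_refl.
Qed.

Lemma in_PS_sub n (S T : pred nat) w :
  (forall a, S a -> T a) -> in_PS n S w -> in_PS n T w.
Proof.
move=> sST [w' [keep_w' [Hw' Hww']]]; exists w'; split => //.
by apply: sub_all keep_w' => -[[a b] s] /andP[/sST -> /sST ->].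
Qed.

Lemma in_PSI n (S T : pred nat) w : valid_word n w ->
  in_PS n S w -> in_PS n T w -> in_PS n (predI S T) w.
Proof.
move=> Hw /(in_PS_filter S Hw) HS /(in_PS_filter T Hw) HT.
apply/(in_PS_filter (predI S T) Hw).
have -> : filter (keep (predI S T)) w = filter (keep T) (filter (keep S) w).
  by rewrite -filter_predI; apply: eq_filter => x; rewrite keep_predI andbC.
apply: beq_trans HT _; exact: braid_eq_filter.
Qed.

Theorem proposition1p2 (n m : nat) (S : nat -> pred nat) :
  (forall i, i < m -> forall a, S i a -> (1 <= a <= n)) ->
  forall w : word, valid_word n w ->
    ((forall i, i < m -> in_PS n (S i) w) <->
     in_PS n (fun a => all (fun i => S i a) (iota 0 m)) w).
Proof.
move=> _ w Hw; split => [HS | Hall i lt_im].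
- elim: m HS => [|k IHk] HS; first exact: in_PST.
  have HSk : in_PS n (S k) w by apply: HS.
  have Hk : in_PS n (fun a => all (fun i => S i a) (iota 0 k)) w.
    by apply: IHk => i lt_ik; apply/HS/ltnW.
  apply: in_PS_sub (in_PSI Hw Hk HSk) => a /andP[Hka HSka].
  by rewrite -addn1 iotaD all_cat /= Hka HSka.
- apply: in_PS_sub Hall => a /allP; apply.
  by rewrite mem_iota.
Qed.
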